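(* Suppose Assumptions A1 and A2 hold, the state space $\mathsf X$ is a finite set (with the discrete topology), and $\hat g$ and the numbers $\int\phi(x,y,\eta)\nu(d\eta)$ ($x,y\in\mathsf X$) are finite. Then Assumption A3 holds for every $p\ge1$, and $\mathcal L_\Phi^p=\mathcal L_\Phi$ for all $p\ge1$. In particular, statements (b)–(e) below hold for every $p\ge1$ if and only if $\mathcal L_\Phi<0$: (b) a Markov solution exists in $\mathcal H_p$; (c) a unique Markov solution exists in $\mathcal H_p$; (d) there is $h\in\mathcal H_p$ such that $T^nh$ converges in $L_p(\pi)$ to a limit in $\mathcal H_p$; (e) a unique Markov solution $h^*$ exists in $\mathcal H_p$ and $T^nh\to h^*$ for every $h\in\mathcal H_p$.
   Context: Standing setting: $\mathsf X$ and $\mathsf W$ are separable, completely metrizable topological spaces with their Borel $\sigma$-algebras. $\{X_t\}_{t\ge0}$ is a stationary Markov process on $\mathsf X$ with transition kernel $\Pi$ and stationary marginal $\pi$; $\Pi^n$ is the $n$-step kernel. $\{\eta_t\}$ is iid with law $\nu$, independent of $\{X_t\}$. $\phi,g:\mathsf X\times\mathsf X\times\mathsf W\to[0,\infty)$ are Borel and $\Phi_{t+1}=\phi(X_t,X_{t+1},\eta_{t+1})$, $G_{t+1}=g(X_t,X_{t+1},\eta_{t+1})$. $\mathbb E_x$ conditions on $X_0=x$; $\mathbb E$ is unconditional. $L_p(\pi)$ ($p\ge1$) is the Banach lattice of functions $h:\mathsf X\to\mathbb R$ with $\int|h|^pd\pi<\infty$ modulo $\pi$-null sets; $\mathcal H_p$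 its nonnegative elements. $Vh(x)=\int h(y)[\int\phi(x,y,\eta)\nu(d\eta)]\Pi(x,dy)$, $\hat g(x)=\int\int\phi g\,d\nu\,\Pi(x,dy)$, $Th=Vh+\hat g$. A Markov solution in $\mathcal H_p$ is $h\in\mathcal H_p$ with $h=Th$. A1: $\phi>0$ everywhere and $G_t>0$ with positive probability. A2: for every Borel $B$ with $\pi(B)>0$ and every $x$ there is $n$ with $\Pi^n(x,B)>0$. A3 (for a given $p\ge1$): $\hat g\in\mathcal H_p$ and $V$ maps $L_p(\pi)$ into itself and some power $V^i$ is compact on $L_p(\pi)$. $\mathcal L_\Phi^p:=\lim_{n}\frac{1}{np}\ln\int(\mathbb E_x\prod_{t=1}^n\Phi_t)^p\pi(dx)$ and $\mathcal L_\Phi:=\mathcal L_\Phi^1=\lim_n\frac1n\ln\mathbb E\prod_{t=1}^n\Phi_t$. *)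

(* finite state space X = {0,...,N-1}, real-valued functions nat -> R. *)
From Stdlib Require Import Reals Lra Lia List.
Import ListNotations.
Open Scope R_scope.

Definition sumN (N : nat) (f : nat -> R) : R :=
  fold_right Rplus 0 (map f (seq 0 N)).

Definition measB (N : nat) (pi : nat -> R) (B : nat -> bool) : R :=
  sumN N (fun x => if B x then pi x else 0).

Fixpoint Pn (N : nat) (P : nat -> nat -> R) (n : nat) (x y : nat) : R :=
  match n with
  | O => if Nat.eqb x y then 1 else 0
  | S m => sumN N (fun z => P x z * Pn N P m z y)
  end.

Definition PnB (N : nat) (P : nat -> nat -> R) (n x : nat) (B : nat -> bool) : R :=
  sumN N (fun y => if B y then Pn N P n x y else 0).

(* x |-> x^p for x >= 0 (with 0^p = 0) *)
Definition rpow (x p : R) : R := if Rlt_dec 0 x then Rpower x p else 0.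

(* The operators of the paper; phib x y = \int phi(x,y,eta) nu(d eta),
   gam x y = \int phi(x,y,eta) g(x,y,eta) nu(d eta). *)
Definition Vop (N : nat) (P phib : nat -> nat -> R) (h : nat -> R) : nat -> R :=
  fun x => sumN N (fun y => h y * phib x y * P x y).

Definition ghat (N : nat) (P gam : nat -> nat -> R) : nat -> R :=
  fun x => sumN N (fun y => gam x y * P x y).

Definition Top (N : nat) (P phib gam : nat -> nat -> R) (h : nat -> R) : nat -> R :=
  fun x => Vop N P phib h x + ghat N P gam x.

Definition Lpnorm (N : nat) (pi : nat -> R) (p : R) (f : nat -> R) : R :=
  rpow (sumN N (fun x => rpow (Rabs (f x)) p * pi x)) (/ p).

Definition aeeq (N : nat) (pi : nat -> R) (f g : nat -> R) : Prop :=
  forall x, (x < N)%nat -> 0 < pi x -> f x = g x.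

(* membership in H_p: nonnegative element of L_p(pi) (every function on a finite
   space is in L_p(pi)) *)
Definition inHp (N : nat) (pi : nat -> R) (h : nat -> R) : Prop :=
  forall x, (x < N)%nat -> 0 < pi x -> 0 <= h x.

Definition LpConv (N : nat) (pi : nat -> R) (p : R) (fs : nat -> nat -> R) (f : nat -> R) : Prop :=
  Un_cv (fun n => Lpnorm N pi p (fun x => fs n x - f x)) 0.

Definition compact_op (N : nat) (pi : nat -> R) (p : R) (A : (nat -> R) -> (nat -> R)) : Prop :=
  forall f : nat -> nat -> R, (forall k, Lpnorm N pi p (f k) <= 1) ->
  exists (s : nat -> nat) (g : nat -> R),
    (forall k, (s k < s (S k))%nat) /\
    Un_cv (fun k => Lpnorm N pi p (fun x => A (f (s k)) x - g x)) 0.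

Definition markov_sol N pi P phib gam (h : nat -> R) : Prop :=
  inHp N pi h /\ aeeq N pi h (Top N P phib gam h).

Definition A3 N pi P phib gam (p : R) : Prop :=
  inHp N pi (ghat N P gam) /\
  (forall h1 h2, aeeq N pi h1 h2 -> aeeq N pi (Vop N P phib h1) (Vop N P phib h2)) /\
  exists i : nat, (1 <= i)%nat /\ compact_op N pi p (Nat.iter i (Vop N P phib)).

(* E_x prod_{t=1}^n Phi_t, computed by conditioning on the path of the chain
   (the eta's are iid, independent of X) *)
Fixpoint Eprod (N : nat) (P phib : nat -> nat -> R) (n x : nat) : R :=
  match n with
  | O => 1
  | S m => sumN N (fun y => P x y * phib x y * Eprod N P phib m y)
  end.

Definition LPhi_seq N pi P phib (p : R) (k : nat) : R :=
  ln (sumN N (fun x => rpow (Eprod N P phib (S k) x) p * pi x)) / (INR (S k) * p).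

(* (1/n) ln E prod_{t=1}^n Phi_t (X_0 ~ pi by stationarity), at n = k+1 *)
Definition LPhi1_seq N pi P phib (k : nat) : R :=
  ln (sumN N (fun x => pi x * Eprod N P phib (S k) x)) / INR (S k).

(* On a finite state space everything happens on the support S = {pi > 0}, which
   stationarity makes closed under Pi and on which A2 makes Pi irreducible.  Since
   phib is bounded away from 0 and infinity, irreducibility yields a Harnack
   inequality c E_y[Phi_1...Phi_n] <= E_x[Phi_1...Phi_n] on S, uniform in n.  Hence
   a_n = E[Phi_1...Phi_n] is multiplicative up to the constant c, ln a_n is linear up
   to a bounded error (Fekete), and both a_n and every E_x[Phi_1...Phi_n], x in S,
   lie within a constant factor of exp(n L_Phi); in particular all the L_p growth
   rates coincide with L_Phi.
   The iterates split as T^n h = V^n h + T^n 0 with |V^n h| <= sup|h| E_x[Phi_1...Phi_n]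
   and T^n 0 increasing.  If L_Phi < 0 the first term decays geometrically and T^n 0
   converges, so every T^n h tends to the same Markov solution.  If L_Phi >= 0 the
   products are bounded below on S; as ghat > 0 somewhere and the chain reaches it,
   T^n 0 grows linearly, contradicting h = T^n h >= T^n 0 for a solution h.
   Compactness in A3 is automatic in finite dimension. *)

From Stdlib Require Import Reals Lra Lia List Classical ClassicalEpsilon.
Open Scope R_scope.

Lemma sumN_S N f : sumN (S N) f = sumN N f + f N.
Proof.
  unfold sumN; rewrite seq_S, map_app; simpl.
  induction (map f (seq 0 N)) as [|a l IH]; simpl; [ring | rewrite IH; ring].
Qed.

Lemma sumN_ext N f g : (forall x, (x < N)%nat -> f x = g x) -> sumN N f = sumN N g.
Proof.
  induction N as [|N IH]; intros Hfg; [reflexivity|].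
  rewrite !sumN_S, IH, Hfg; auto.
Qed.

Lemma sumN_le N f g : (forall x, (x < N)%nat -> f x <= g x) -> sumN N f <= sumN N g.
Proof.
  induction N as [|N IH]; intros Hfg; [apply Rle_refl|].
  rewrite !sumN_S; apply Rplus_le_compat; auto.
Qed.

Lemma sumN_plus N f g : sumN N (fun x => f x + g x) = sumN N f + sumN N g.
Proof. induction N as [|N IH]; [cbn; ring|]. rewrite !sumN_S, IH; ring. Qed.

Lemma sumN_scal N c f : sumN N (fun x => c * f x) = c * sumN N f.
Proof. induction N as [|N IH]; [cbn; ring|]. rewrite !sumN_S, IH; ring. Qed.

Lemma sumN_zero N : sumN N (fun _ => 0) = 0.
Proof. induction N as [|N IH]; [reflexivity|]. rewrite sumN_S, IH; ring. Qed.

Lemma sumN_nonneg N f : (forall x, (x < N)%nat -> 0 <= f x) -> 0 <= sumN N f.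
Proof. intros Hf. rewrite <- (sumN_zero N). apply sumN_le; auto. Qed.

Lemma sumN_term_le N f y :
  (forall x, (x < N)%nat -> 0 <= f x) -> (y < N)%nat -> f y <= sumN N f.
Proof.
  induction N as [|N IH]; intros Hf Hy; [lia|].
  rewrite sumN_S. destruct (Nat.eq_dec y N) as [->|Hne].
  - assert (0 <= sumN N f) by (apply sumN_nonneg; auto). lra.
  - assert (f y <= sumN N f) by (apply IH; auto; lia).
    assert (0 <= f N) by auto. lra.
Qed.

Lemma sumN_indicator N f y :
  (y < N)%nat -> sumN N (fun z => if Nat.eqb z y then f z else 0) = f y.
Proof.
  induction N as [|N IH]; intros Hy; [lia|].
  rewrite sumN_S. destruct (Nat.eq_dec y N) as [->|Hne].
  - rewrite Nat.eqb_refl, (sumN_ext _ _ (fun _ => 0)), sumN_zero; [ring|].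
    intros x Hx. destruct (Nat.eqb_spec x N); [lia | reflexivity].
  - rewrite IH by lia. destruct (Nat.eqb_spec N y); [lia | ring].
Qed.

Lemma Un_cv_sumN N (F : nat -> nat -> R) G :
  (forall x, (x < N)%nat -> Un_cv (fun n => F n x) (G x)) ->
  Un_cv (fun n => sumN N (F n)) (sumN N G).
Proof.
  induction N as [|N IH]; intros HF.
  - intros e He; exists 0%nat; intros n _; unfold R_dist; cbn.
    rewrite Rminus_0_r, Rabs_R0; lra.
  - rewrite sumN_S. apply Un_cv_ext with (fun n => sumN N (F n) + F n N).
    + intros n; symmetry; apply sumN_S.
    + apply CV_plus; auto.
Qed.

Lemma finite_uniform N (Q : nat -> Prop) (Pd : nat -> R -> Prop) :
  (forall x d d', 0 < d' <= d -> Pd x d -> Pd x d') ->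
  (forall x, (x < N)%nat -> Q x -> exists d, 0 < d /\ Pd x d) ->
  exists d, 0 < d /\ forall x, (x < N)%nat -> Q x -> Pd x d.
Proof.
  intros Hmono. induction N as [|N IH]; intros Hex.
  - exists 1; split; [lra | intros; lia].
  - destruct IH as [d [Hd HPd]]; [intros; apply Hex; auto; lia|].
    destruct (classic (Q N)) as [HQ|HQ].
    + destruct (Hex N) as [e [He HPe]]; auto.
      assert (Hde : 0 < Rmin d e) by (apply Rmin_glb_lt; auto).
      exists (Rmin d e); split; auto.
      intros x Hx Qx. destruct (Nat.eq_dec x N) as [->|Hne].
      * apply Hmono with e; auto. split; auto; apply Rmin_r.
      * apply Hmono with d; [split; auto; apply Rmin_l | apply HPd; auto; lia].
    + exists d; split; auto.
      intros x Hx Qx. destruct (Nat.eq_dec x N) as [->|Hne]; [tauto|].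
      apply HPd; auto; lia.
Qed.

Lemma finite_lower_bound N (Q : nat -> Prop) (F : nat -> R) :
  (forall x, (x < N)%nat -> Q x -> 0 < F x) ->
  exists d, 0 < d /\ forall x, (x < N)%nat -> Q x -> d <= F x.
Proof.
  intros HF. apply (finite_uniform N Q (fun x d => d <= F x)).
  - intros x d d' Hd Hx; lra.
  - intros x Hx Qx. exists (F x); split; [auto | lra].
Qed.

Lemma finite_upper_bound N (Q : nat -> Prop) (F : nat -> R) :
  exists B, 0 < B /\ forall x, (x < N)%nat -> Q x -> F x <= B.
Proof.
  induction N as [|N [B [HB HFB]]].
  - exists 1; split; [lra | intros; lia].
  - exists (Rmax B (Rabs (F N))); split; [eapply Rlt_le_trans; [apply HB | apply Rmax_l]|].
    intros x Hx Qx. destruct (Nat.eq_dec x N) as [->|Hne].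
    + eapply Rle_trans; [apply RRle_abs | apply Rmax_r].
    + eapply Rle_trans; [apply HFB; auto; lia | apply Rmax_l].
Qed.

Lemma finite_eventually N (Q : nat -> Prop) (Ev : nat -> nat -> Prop) :
  (forall x, (x < N)%nat -> Q x -> exists M, forall n, (M <= n)%nat -> Ev n x) ->
  exists M, forall n, (M <= n)%nat -> forall x, (x < N)%nat -> Q x -> Ev n x.
Proof.
  induction N as [|N IH]; intros Hex.
  - exists 0%nat; intros; lia.
  - destruct IH as [M HM]; [intros; apply Hex; auto; lia|].
    destruct (classic (Q N)) as [HQ|HQ].
    + destruct (Hex N) as [M' HM']; auto. exists (max M M').
      intros n Hn x Hx Qx. destruct (Nat.eq_dec x N) as [->|Hne];
        [apply HM'; lia | apply HM; auto; lia].
    + exists M. intros n Hn x Hx Qx. destruct (Nat.eq_dec x N) as [->|Hne];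
        [tauto | apply HM; auto; lia].
Qed.

Lemma Rabs_le_between a b : Rabs a <= b -> - b <= a <= b.
Proof.
  intros Hab. pose proof (Rle_abs a). pose proof (Rle_abs (- a)). rewrite Rabs_Ropp in *. lra.
Qed.

Lemma ln_le_compat x y : 0 < x -> x <= y -> ln x <= ln y.
Proof. intros Hx [Hlt|<-]; [left; apply ln_increasing; auto | lra]. Qed.

Lemma exp_le_compat x y : x <= y -> exp x <= exp y.
Proof. intros [Hlt|<-]; [left; apply exp_increasing; auto | lra]. Qed.

Lemma exp_INR_mult n L : exp (INR n * L) = exp L ^ n.
Proof.
  induction n as [|n IH]; [cbn; rewrite Rmult_0_l, exp_0; reflexivity|].
  rewrite S_INR, Rmult_plus_distr_r, Rmult_1_l, exp_plus, IH; cbn; ring.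
Qed.

Lemma pow_le_1_decr a n k : 0 <= a <= 1 -> (n <= k)%nat -> a ^ k <= a ^ n.
Proof.
  intros Ha Hnk. replace k with (n + (k - n))%nat by lia. rewrite pow_add.
  assert (a ^ (k - n) <= 1) by (rewrite <- (pow1 (k - n)); apply pow_incr; lra).
  pose proof (pow_le a n (proj1 Ha)). pose proof (pow_le a (k - n) (proj1 Ha)). nra.
Qed.

Lemma Un_cv_const a : Un_cv (fun _ => a) a.
Proof. intros e He. exists 0%nat. intros. unfold R_dist. rewrite Rminus_diag, Rabs_R0. auto. Qed.

Lemma Un_cv_succ u l : Un_cv u l -> Un_cv (fun n => u (S n)) l.
Proof. intros Hu e He. destruct (Hu e He) as [M HM]. exists M. intros. apply HM. lia. Qed.

Lemma div_INR_small K e : 0 < e -> exists M, forall m, (M <= m)%nat -> K / INR (S m) < e.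
Proof.
  intros He. pose proof (Rabs_pos K). pose proof (RRle_abs K).
  destruct (archimed_cor1 (e / (Rabs K + 1))) as [M [HM HM0]];
    [apply Rdiv_lt_0_compat; lra|].
  exists M. intros m Hm.
  assert (HM1 : 0 < INR M) by (apply lt_0_INR; auto).
  assert (/ INR (S m) <= / INR M) by (apply Rinv_le_contravar; auto; apply le_INR; lia).
  assert (/ INR M * (Rabs K + 1) < e).
  { apply Rmult_lt_reg_r with (/ (Rabs K + 1)); [apply Rinv_0_lt_compat; lra|].
    rewrite Rmult_assoc, Rinv_r, Rmult_1_r by lra. exact HM. }
  assert (0 <= / INR (S m)) by (left; apply Rinv_0_lt_compat, lt_0_INR; lia).
  unfold Rdiv. nra.
Qed.

Lemma Un_cv_of_rate (a : nat -> R) L K :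
  (forall j, Rabs (a j - L) <= K / INR (S j)) -> Un_cv a L.
Proof.
  intros Hrate e He. destruct (div_INR_small K e He) as [M HM].
  exists M. intros n Hn. unfold R_dist. eapply Rle_lt_trans; [apply Hrate | apply HM; lia].
Qed.

Lemma archimed_mult a b : 0 < a -> exists i, b < INR i * a.
Proof.
  intros Ha. destruct (div_INR_small (/ a * b) 1 Rlt_0_1) as [M HM].
  exists (S M). specialize (HM M (le_n M)).
  assert (HSM : 0 < INR (S M)) by (apply lt_0_INR; lia).
  apply Rmult_lt_reg_r with (/ (a * INR (S M))); [apply Rinv_0_lt_compat; nra|].
  replace (INR (S M) * a * / (a * INR (S M))) with 1 by (field; lra).
  replace (b * / (a * INR (S M))) with (/ a * b / INR (S M)) by (field; lra). exact HM.
Qed.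

(** * Quasi-additive sequences *)

Lemma Rabs_ratio_le a b w v C :
  0 < a -> 0 < b -> Rabs (w - a * v) <= a * C -> Rabs (w / (a * b) - v / b) <= C / b.
Proof.
  intros Ha Hb Hw.
  replace (w / (a * b) - v / b) with ((w - a * v) / (a * b)) by (field; lra).
  unfold Rdiv. rewrite Rabs_mult, Rabs_inv, (Rabs_right (a * b)) by nra.
  apply Rmult_le_reg_r with (a * b); [nra|].
  replace (Rabs (w - a * v) * / (a * b) * (a * b)) with (Rabs (w - a * v)) by (field; nra).
  replace (C * / b * (a * b)) with (a * C) by (field; lra). exact Hw.
Qed.

Section QuasiAdditive.
Variables (u : nat -> R) (C : R).
Hypothesis HC : 0 <= C.
Hypothesis Hu : forall n k, Rabs (u (n + k)%nat - u n - u k) <= C.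

Lemma quasi_additive_multiple k m : Rabs (u (S m * k)%nat - INR (S m) * u k) <= INR (S m) * C.
Proof.
  induction m as [|m IH].
  - change (INR 1) with 1. rewrite Nat.mul_1_l, Rmult_1_l, Rminus_diag, Rabs_R0. lra.
  - replace (S (S m) * k)%nat with (k + S m * k)%nat by lia. rewrite S_INR.
    replace (u (k + S m * k)%nat - (INR (S m) + 1) * u k)
      with ((u (k + S m * k)%nat - u k - u (S m * k)%nat) + (u (S m * k)%nat - INR (S m) * u k))
      by ring.
    pose proof (Hu k (S m * k)). eapply Rle_trans; [apply Rabs_triang | lra].
Qed.

Lemma quasi_additive_ratio_close n k :
  Rabs (u (S n) / INR (S n) - u (S k) / INR (S k)) <= C / INR (S n) + C / INR (S k).
Proof.
  assert (Hn : 0 < INR (S n)) by (apply lt_0_INR; lia).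
  assert (Hk : 0 < INR (S k)) by (apply lt_0_INR; lia).
  set (w := u (S k * S n)%nat).
  assert (Hwn : Rabs (w / (INR (S k) * INR (S n)) - u (S n) / INR (S n)) <= C / INR (S n))
    by (apply Rabs_ratio_le; auto; apply quasi_additive_multiple).
  assert (Hwk : Rabs (w / (INR (S n) * INR (S k)) - u (S k) / INR (S k)) <= C / INR (S k)).
  { apply Rabs_ratio_le; auto. unfold w. rewrite Nat.mul_comm. apply quasi_additive_multiple. }
  rewrite Rmult_comm in Hwk.
  replace (u (S n) / INR (S n) - u (S k) / INR (S k)) with
    (- (w / (INR (S k) * INR (S n)) - u (S n) / INR (S n))
     + (w / (INR (S k) * INR (S n)) - u (S k) / INR (S k))) by ring.
  eapply Rle_trans; [apply Rabs_triang|]. rewrite Rabs_Ropp. lra.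
Qed.

Lemma quasi_additive_limit :
  exists L, forall j, Rabs (u (S j) / INR (S j) - L) <= C / INR (S j).
Proof.
  destruct (R_complete (fun j => u (S j) / INR (S j))) as [L HL].
  { intros e He. destruct (div_INR_small C (e / 2)) as [M HM]; [lra|].
    exists M. intros n m Hn Hm. unfold R_dist.
    pose proof (quasi_additive_ratio_close n m). pose proof (HM n Hn). pose proof (HM m Hm). lra. }
  exists L. intros j.
  apply (Rle_cv_lim (Un := fun m => Rabs (u (S j) / INR (S j) - u (S m) / INR (S m)))
                    (Vn := fun m => C / INR (S j) + C / INR (S m))).
  - apply quasi_additive_ratio_close.
  - apply cv_cvabs, CV_minus; [apply Un_cv_const | exact HL].
  - assert (Hvanish : Un_cv (fun m => C / INR (S m)) 0).
    { apply (Un_cv_of_rate _ 0 C). intros m. rewrite Rminus_0_r, Rabs_right; [lra|].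
      apply Rle_ge, Rmult_le_pos; auto. left; apply Rinv_0_lt_compat, lt_0_INR; lia. }
    pose proof (CV_plus _ _ _ _ (Un_cv_const (C / INR (S j))) Hvanish) as Hsum.
    rewrite Rplus_0_r in Hsum. exact Hsum.
Qed.

Lemma quasi_additive_linear : exists L, forall n, Rabs (u n - INR n * L) <= C.
Proof.
  destruct quasi_additive_limit as [L HL]. exists L. intros [|j].
  - pose proof (Hu 0 0) as Hu0. cbn [INR Nat.add] in *.
    replace (u 0%nat - u 0%nat - u 0%nat) with (- u 0%nat) in Hu0 by ring.
    rewrite Rabs_Ropp in Hu0. rewrite Rmult_0_l, Rminus_0_r. exact Hu0.
  - specialize (HL j). assert (Hj : 0 < INR (S j)) by (apply lt_0_INR; lia).
    replace (u (S j) - INR (S j) * L) with (INR (S j) * (u (S j) / INR (S j) - L)) by (field; lra).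
    rewrite Rabs_mult, Rabs_right by lra.
    apply Rmult_le_reg_l with (/ INR (S j)); [apply Rinv_0_lt_compat; lra|].
    rewrite <- Rmult_assoc, Rinv_l, Rmult_1_l by lra. rewrite Rmult_comm. exact HL.
Qed.

End QuasiAdditive.

Lemma strictly_increasing_ge (s : nat -> nat) :
  (forall k, (s k < s (S k))%nat) -> forall k, (k <= s k)%nat.
Proof. intros Hs k. induction k; [lia|]. specialize (Hs k). lia. Qed.

Lemma strictly_increasing_lt (s : nat -> nat) :
  (forall k, (s k < s (S k))%nat) -> forall a b, (a < b)%nat -> (s a < s b)%nat.
Proof. intros Hs a b Hab. induction Hab; [apply Hs|]. specialize (Hs m). lia. Qed.

Lemma Un_cv_subseq (u : nat -> R) l (s : nat -> nat) :
  (forall k, (s k < s (S k))%nat) -> Un_cv u l -> Un_cv (fun k => u (s k)) l.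
Proof.
  intros Hs Hu e He. destruct (Hu e He) as [M HM]. exists M. intros n Hn. apply HM.
  pose proof (strictly_increasing_ge s Hs n). lia.
Qed.

Lemma bounded_subseq_cv (u : nat -> R) B : (forall k, Rabs (u k) <= B) ->
  exists s l, (forall k, (s k < s (S k))%nat) /\ Un_cv (fun k => u (s k)) l.
Proof.
  intros Hb.
  destruct (Bolzano_Weierstrass u (fun c => - B <= c <= B) (compact_P3 (- B) B)) as [l Hl].
  { intros n. apply Rabs_le_between; auto. }
  assert (Hnear : forall n k, {p | (n <= p)%nat /\ Rabs (u p - l) < / INR (S k)}).
  { intros n k. apply constructive_indefinite_description.
    assert (Hpos : 0 < / INR (S k)) by (apply Rinv_0_lt_compat, lt_0_INR; lia).
    destruct (Hl (disc l (mkposreal _ Hpos)) n) as [p [Hp1 Hp2]].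
    - exists (mkposreal _ Hpos). intros y Hy. exact Hy.
    - exists p. split; auto. }
  exists (fix s k := match k with
                    | O => proj1_sig (Hnear 0%nat 0%nat)
                    | S k' => proj1_sig (Hnear (S (s k')) (S k'))
                    end), l.
  split.
  - intros k. exact (proj1 (proj2_sig (Hnear _ (S k)))).
  - apply (Un_cv_of_rate _ _ 1). intros k. unfold Rdiv. rewrite Rmult_1_l. left.
    destruct k; exact (proj2 (proj2_sig (Hnear _ _))).
Qed.

Lemma bounded_subseq_cv_finite n (Q : nat -> Prop) (F : nat -> nat -> R) B :
  (forall k x, (x < n)%nat -> Q x -> Rabs (F k x) <= B) ->
  exists s G, (forall k, (s k < s (S k))%nat) /\
    forall x, (x < n)%nat -> Q x -> Un_cv (fun k => F (s k) x) (G x).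
Proof.
  induction n as [|n IH]; intros Hb.
  - exists (fun k => k), (fun _ => 0). split; [intros; lia | intros; lia].
  - destruct IH as [s [G [Hs HG]]]; [intros; apply Hb; auto; lia|].
    destruct (classic (Q n)) as [HQ|HQ].
    + destruct (bounded_subseq_cv (fun k => F (s k) n) B) as [s' [l [Hs' Hl]]];
        [intros; apply Hb; auto|].
      exists (fun k => s (s' k)), (fun x => if Nat.eqb x n then l else G x). split.
      * intros k. apply strictly_increasing_lt; auto.
      * intros x Hx Qx. destruct (Nat.eqb_spec x n) as [->|Hne]; auto.
        apply (Un_cv_subseq (fun k => F (s k) x)); auto. apply HG; auto; lia.
    + exists s, G. split; auto.
      intros x Hx Qx. destruct (Nat.eq_dec x n) as [->|Hne]; [tauto|]. apply HG; auto; lia.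
Qed.

Lemma ln_Rpower_rate_cv (a : nat -> R) c L p : 0 < c -> 0 < p ->
  (forall n, Rpower (c * exp (INR (S n) * L)) p <= a n <= Rpower (exp (INR (S n) * L) / c) p) ->
  Un_cv (fun n => ln (a n) / (INR (S n) * p)) L.
Proof.
  intros Hc Hp Ha. apply (Un_cv_of_rate _ _ (- ln c)). intros n.
  assert (Hn : 0 < INR (S n)) by (apply lt_0_INR; lia).
  assert (Hexp : 0 < exp (INR (S n) * L)) by apply exp_pos.
  assert (Hcinv : 0 < / c) by (apply Rinv_0_lt_compat; auto).
  destruct (Ha n) as [Hlo Hhi].
  assert (Hpos : 0 < Rpower (c * exp (INR (S n) * L)) p) by apply exp_pos.
  pose proof (ln_le_compat _ _ Hpos Hlo) as Hlo'.
  pose proof (ln_le_compat _ _ (Rlt_le_trans _ _ _ Hpos Hlo) Hhi) as Hhi'.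
  unfold Rdiv in Hhi'. rewrite ln_Rpower, ln_mult, ln_exp in Hlo', Hhi' by auto.
  rewrite ln_Rinv in Hhi' by auto.
  replace (ln (a n) / (INR (S n) * p) - L)
    with ((ln (a n) - INR (S n) * p * L) / (INR (S n) * p)) by (field; lra).
  replace (- ln c / INR (S n)) with (- (p * ln c) / (INR (S n) * p)) by (field; lra).
  unfold Rdiv. rewrite Rabs_mult, (Rabs_right (/ _)) by (left; apply Rinv_0_lt_compat; nra).
  apply Rmult_le_compat_r; [left; apply Rinv_0_lt_compat; nra|]. apply Rabs_le. nra.
Qed.

Lemma Rabs_ln_le_of_ratio a b c : 0 < c -> 0 < b -> c * b <= a <= b / c ->
  Rabs (ln a - ln b) <= - ln c.
Proof.
  intros Hc Hb [Hlo Hhi].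
  assert (Hcb : 0 < c * b) by (apply Rmult_lt_0_compat; auto).
  pose proof (ln_le_compat _ _ Hcb Hlo) as Hlo'.
  pose proof (ln_le_compat _ _ (Rlt_le_trans _ _ _ Hcb Hlo) Hhi) as Hhi'.
  unfold Rdiv in Hhi'. rewrite ln_mult in Hlo', Hhi' by (auto; apply Rinv_0_lt_compat; auto).
  rewrite ln_Rinv in Hhi' by auto. apply Rabs_le. lra.
Qed.

Lemma ratio_of_Rabs_ln_le a b c : 0 < c -> 0 < a -> 0 < b -> Rabs (ln a - ln b) <= - ln c ->
  c * b <= a <= b / c.
Proof.
  intros Hc Ha Hb Hlog. apply Rabs_le_between in Hlog.
  rewrite <- (exp_ln a), <- (exp_ln b), <- (exp_ln c) by auto.
  unfold Rdiv. rewrite <- exp_plus, <- exp_Ropp, <- exp_plus.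
  split; apply exp_le_compat; lra.
Qed.

Lemma rpow_nonneg a q : 0 <= rpow a q.
Proof. unfold rpow. destruct (Rlt_dec 0 a); [left; apply exp_pos | lra]. Qed.

Lemma rpow_pos_eq a q : 0 < a -> rpow a q = Rpower a q.
Proof. intros Ha. unfold rpow. destruct (Rlt_dec 0 a); [reflexivity | lra]. Qed.

Section MarkovChain.

Variables (N : nat) (pi : nat -> R) (P phib gam : nat -> nat -> R).
Hypothesis Hpi0 : forall x, (x < N)%nat -> 0 <= pi x.
Hypothesis Hpi1 : sumN N pi = 1.
Hypothesis HP0 : forall x y, (x < N)%nat -> (y < N)%nat -> 0 <= P x y.
Hypothesis HP1 : forall x, (x < N)%nat -> sumN N (P x) = 1.
Hypothesis Hstat : forall y, (y < N)%nat -> sumN N (fun x => pi x * P x y) = pi y.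
Hypothesis HA1phi : forall x y, (x < N)%nat -> (y < N)%nat -> 0 < phib x y.
Hypothesis Hgam0 : forall x y, (x < N)%nat -> (y < N)%nat -> 0 <= gam x y.
Hypothesis HA1g :
  exists x y, (x < N)%nat /\ (y < N)%nat /\ 0 < pi x /\ 0 < P x y /\ 0 < gam x y.
Hypothesis HA2 : forall B : nat -> bool, 0 < measB N pi B ->
  forall x, (x < N)%nat -> exists n, 0 < PnB N P n x B.

Local Notation V := (Vop N P phib).
Local Notation T := (Top N P phib gam).
Local Notation E := (Eprod N P phib).
Local Notation g := (ghat N P gam).

Definition in_support x := (x < N)%nat /\ 0 < pi x.

Lemma support_closed x y : in_support x -> (y < N)%nat -> 0 < P x y -> 0 < pi y.
Proof.
  intros [Hx Hpx] Hy HPxy. rewrite <- (Hstat y Hy).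
  eapply Rlt_le_trans; [| apply sumN_term_le with (y := x); auto].
  - apply Rmult_lt_0_compat; auto.
  - intros z Hz. apply Rmult_le_pos; auto.
Qed.

Lemma kernel_vanishes_off_support x y : in_support x -> (y < N)%nat -> ~ 0 < pi y -> P x y = 0.
Proof.
  intros Hx Hy Hpy. destruct (HP0 x y (proj1 Hx) Hy) as [Hlt|Heq]; auto.
  exfalso; apply Hpy; eapply support_closed; eauto.
Qed.

Lemma support_cases x : (x < N)%nat -> pi x = 0 \/ in_support x.
Proof. intros Hx. destruct (Hpi0 x Hx) as [Hlt|Heq]; [right; split | left]; auto. Qed.

Lemma sum_pi_const K : sumN N (fun x => pi x * K) = K.
Proof.
  rewrite (sumN_ext _ _ (fun x => K * pi x)) by (intros; ring).
  rewrite sumN_scal, Hpi1. ring.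
Qed.

Lemma sum_pi_le f h : (forall x, in_support x -> f x <= h x) ->
  sumN N (fun x => pi x * f x) <= sumN N (fun x => pi x * h x).
Proof.
  intros Hfh. apply sumN_le. intros x Hx. destruct (support_cases x Hx) as [->|Hs].
  - lra.
  - apply Rmult_le_compat_l; auto.
Qed.

Lemma Pn_nonneg k x y : (x < N)%nat -> 0 <= Pn N P k x y.
Proof.
  revert x. induction k as [|k IH]; intros x Hx; cbn.
  - destruct (Nat.eqb x y); lra.
  - apply sumN_nonneg. intros z Hz. apply Rmult_le_pos; auto.
Qed.

Lemma irreducible_path x y : (x < N)%nat -> in_support y -> exists k, 0 < Pn N P k x y.
Proof.
  intros Hx [Hy Hpy].
  destruct (HA2 (fun z => Nat.eqb z y)) with (x := x) as [k Hk]; auto.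
  - unfold measB. rewrite sumN_indicator; auto.
  - exists k. unfold PnB in Hk. rewrite sumN_indicator in Hk; auto.
Qed.

Lemma phib_bounded : exists lo hi, 0 < lo <= 1 /\ 1 <= hi /\
  forall x y, (x < N)%nat -> (y < N)%nat -> lo <= phib x y <= hi.
Proof.
  destruct (finite_uniform N (fun _ => True) (fun x d => forall y, (y < N)%nat -> d <= phib x y))
    as [lo [Hlo Hlo']].
  - intros x d d' Hd Hx y Hy. specialize (Hx y Hy). lra.
  - intros x Hx _. destruct (finite_lower_bound N (fun _ => True) (phib x)) as [d [Hd Hd']].
    + intros y Hy _. auto.
    + exists d; split; auto.
  - set (total := sumN N (fun x => sumN N (phib x))).
    assert (Hrow : forall x, (x < N)%nat -> 0 <= sumN N (phib x))
      by (intros x Hx; apply sumN_nonneg; intros y Hy; left; auto).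
    exists (Rmin lo 1), (Rmax total 1).
    split; [split; [apply Rmin_glb_lt; lra | apply Rmin_r]|]. split; [apply Rmax_r|].
    intros x y Hx Hy. split.
    + eapply Rle_trans; [apply Rmin_l | apply Hlo'; auto].
    + eapply Rle_trans; [| apply Rmax_l].
      apply Rle_trans with (sumN N (phib x)).
      * apply sumN_term_le; auto. intros z Hz; left; auto.
      * apply (sumN_term_le N (fun x => sumN N (phib x))); auto.
Qed.

Lemma Vop_ext f h x : (forall y, (y < N)%nat -> f y = h y) -> V f x = V h x.
Proof. intros Hfh. unfold Vop. apply sumN_ext. intros y Hy. rewrite Hfh; auto. Qed.

Lemma Vop_ext_support f h x :
  in_support x -> (forall y, in_support y -> f y = h y) -> V f x = V h x.
Proof.
  intros Hx Hfh. unfold Vop. apply sumN_ext. intros y Hy.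
  destruct (Rlt_dec 0 (pi y)) as [Hpy|Hpy].
  - rewrite Hfh; [auto | split; auto].
  - rewrite (kernel_vanishes_off_support x y); auto; ring.
Qed.

Lemma Viter_ext k f h x : (forall y, f y = h y) -> Nat.iter k V f x = Nat.iter k V h x.
Proof. revert x. induction k as [|k IH]; intros x Hfh; [apply Hfh | apply Vop_ext; intros; apply IH; auto]. Qed.

Lemma Viter_lin k f h a b x :
  Nat.iter k V (fun y => a * f y + b * h y) x = a * Nat.iter k V f x + b * Nat.iter k V h x.
Proof.
  revert x; induction k as [|k IH]; intros x; [reflexivity|]. rewrite !Nat.iter_succ. unfold Vop.
  rewrite (sumN_ext _ _ (fun y => a * (Nat.iter k V f y * phib x y * P x y)
                                 + b * (Nat.iter k V h y * phib x y * P x y))).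
  - rewrite sumN_plus, !sumN_scal. reflexivity.
  - intros y Hy. rewrite IH. ring.
Qed.

Lemma Viter_nonneg k f x :
  in_support x -> (forall y, in_support y -> 0 <= f y) -> 0 <= Nat.iter k V f x.
Proof.
  revert x; induction k as [|k IH]; intros x Hx Hf; [apply Hf; auto|]. rewrite Nat.iter_succ.
  apply sumN_nonneg. intros y Hy. destruct (Rlt_dec 0 (pi y)) as [Hpy|Hpy].
  - pose proof (HA1phi x y (proj1 Hx) Hy). pose proof (HP0 x y (proj1 Hx) Hy).
    apply Rmult_le_pos; [apply Rmult_le_pos|]; auto; [apply IH; [split|]; auto | lra].
  - rewrite (kernel_vanishes_off_support x y); auto; lra.
Qed.

Lemma Viter_mono k f h x :
  in_support x -> (forall y, in_support y -> f y <= h y) -> Nat.iter k V f x <= Nat.iter k V h x.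
Proof.
  intros Hx Hfh.
  assert (Hdiff : 0 <= Nat.iter k V (fun y => 1 * h y + (-1) * f y) x).
  { apply Viter_nonneg; auto. intros y Hy. specialize (Hfh y Hy). lra. }
  rewrite Viter_lin in Hdiff. lra.
Qed.

Lemma Viter_const k c x : Nat.iter k V (fun _ => c) x = c * E k x.
Proof.
  revert x; induction k as [|k IH]; intros x; [cbn; ring|]. rewrite Nat.iter_succ. cbn [Eprod]. unfold Vop.
  rewrite <- sumN_scal. apply sumN_ext. intros y Hy. rewrite IH. ring.
Qed.

Lemma Viter_abs k f B x : in_support x -> (forall y, in_support y -> Rabs (f y) <= B) ->
  Rabs (Nat.iter k V f x) <= B * E k x.
Proof.
  intros Hx Hf. apply Rabs_le. rewrite <- Viter_const.
  replace (- Nat.iter k V (fun _ => B) x) with (Nat.iter k V (fun _ => - B) x)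
    by (rewrite !Viter_const; ring).
  split; apply Viter_mono; auto; intros y Hy; pose proof (Rabs_le_between _ _ (Hf y Hy)); lra.
Qed.

Lemma Eprod_split a b x : E (a + b) x = Nat.iter a V (E b) x.
Proof.
  rewrite <- (Rmult_1_l (E (a + b) x)), <- Viter_const, Nat.iter_add.
  apply Viter_ext. intros y. rewrite Viter_const. ring.
Qed.

Lemma Eprod_bounds lo hi : 0 < lo ->
  (forall x y, (x < N)%nat -> (y < N)%nat -> lo <= phib x y <= hi) ->
  forall k x, (x < N)%nat -> lo ^ k <= E k x <= hi ^ k.
Proof.
  intros Hlo Hb k. induction k as [|k IH]; intros x Hx; [cbn; lra|]. cbn [Eprod pow].
  rewrite <- (Rmult_1_r (lo * lo ^ k)), <- (Rmult_1_r (hi * hi ^ k)), <- (HP1 x Hx), <- !sumN_scal.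
  assert (Hlok : 0 <= lo ^ k) by (apply pow_le; lra).
  split; apply sumN_le; intros y Hy;
    specialize (IH y Hy); specialize (Hb x y Hx Hy); pose proof (HP0 x y Hx Hy).
  - replace (lo * lo ^ k * P x y) with (P x y * lo * lo ^ k) by ring.
    apply Rmult_le_compat; try lra; [nra | apply Rmult_le_compat_l; lra].
  - replace (hi * hi ^ k * P x y) with (P x y * hi * hi ^ k) by ring.
    apply Rmult_le_compat; try lra; [nra | apply Rmult_le_compat_l; lra].
Qed.

Lemma Eprod_pos k x : (x < N)%nat -> 0 < E k x.
Proof.
  intros Hx. destruct phib_bounded as [lo [hi [Hlo [Hhi Hb]]]].
  pose proof (Eprod_bounds lo hi (proj1 Hlo) Hb k x Hx). pose proof (pow_lt lo k (proj1 Hlo)). lra.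
Qed.

Lemma Viter_path_lower lo : 0 < lo -> (forall x y, (x < N)%nat -> (y < N)%nat -> lo <= phib x y) ->
  forall k f x y, in_support x -> in_support y -> (forall z, in_support z -> 0 <= f z) ->
  lo ^ k * Pn N P k x y * f y <= Nat.iter k V f x.
Proof.
  intros Hlo Hb k. induction k as [|k IH]; intros f x y Hx Hy Hf.
  - cbn. destruct (Nat.eqb_spec x y) as [->|Hne]; [lra|]. specialize (Hf x Hx). lra.
  - rewrite Nat.iter_succ. cbn [Pn pow]. unfold Vop at 1.
    rewrite <- sumN_scal, Rmult_comm, <- sumN_scal. apply sumN_le. intros z Hz.
    destruct (Rlt_dec 0 (pi z)) as [Hpz|Hpz].
    + assert (Hzs : in_support z) by (split; auto). specialize (IH f z y Hzs Hy Hf).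
      pose proof (HP0 x z (proj1 Hx) Hz). pose proof (Hb x z (proj1 Hx) Hz).
      pose proof (Pn_nonneg k z y Hz). pose proof (Hf y Hy). pose proof (pow_le lo k (Rlt_le _ _ Hlo)).
      replace (f y * (lo * lo ^ k * (P x z * Pn N P k z y)))
        with (lo ^ k * Pn N P k z y * f y * lo * P x z) by ring.
      apply Rmult_le_compat_r; auto. apply Rmult_le_compat; try lra.
      apply Rmult_le_pos; [apply Rmult_le_pos|]; auto.
    + rewrite (kernel_vanishes_off_support x z); auto. lra.
Qed.

(** * Harnack inequality and the growth rate *)

Definition harnack c := forall n x y, in_support x -> in_support y -> c * E n y <= E n x.

(* Walk from [x] to [y] along a path of positive probability, then follow [y];
   horizons shorter than the path are covered by [lo^n <= E n <= hi^n]. *)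
Lemma harnack_pair x y : in_support x -> in_support y ->
  exists c, 0 < c /\ forall n, c * E n y <= E n x.
Proof.
  intros Hx Hy. destruct phib_bounded as [lo [hi [Hlo [Hhi Hb]]]].
  destruct (irreducible_path x y (proj1 Hx) Hy) as [k Hk].
  set (q := Pn N P k x y) in *.
  assert (Hlok : 0 < lo ^ k) by (apply pow_lt; lra).
  assert (Hhik : 0 < hi ^ k) by (apply pow_lt; lra).
  assert (Hq1 : 0 < Rmin q 1 <= 1) by (split; [apply Rmin_glb_lt; lra | apply Rmin_r]).
  assert (Hc : 0 < lo ^ k * Rmin q 1 / hi ^ k)
    by (apply Rdiv_lt_0_compat; [apply Rmult_lt_0_compat|]; lra).
  exists (lo ^ k * Rmin q 1 / hi ^ k). split; auto.
  intros n. destruct (Compare_dec.le_lt_dec k n) as [Hkn|Hnk].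
  - replace n with (k + (n - k))%nat by lia. set (m := (n - k)%nat).
    assert (Hfrom_x : lo ^ k * q * E m y <= E (k + m) x).
    { rewrite Eprod_split. apply (Viter_path_lower lo); auto; [lra | intros; apply Hb; auto|].
      intros z Hz. left; apply Eprod_pos, Hz. }
    assert (Hfrom_y : E (k + m) y <= hi ^ k * E m y).
    { rewrite Nat.add_comm, Eprod_split, <- Viter_const.
      apply Viter_mono; auto. intros z Hz. apply (Eprod_bounds lo hi); [lra | auto | apply Hz]. }
    pose proof (Eprod_pos m y (proj1 Hy)). pose proof (Rmin_l q 1).
    apply Rle_trans with (lo ^ k * Rmin q 1 * E m y).
    2:{ eapply Rle_trans; [| exact Hfrom_x].
        apply Rmult_le_compat_r; [lra | apply Rmult_le_compat_l; lra]. }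
    apply Rle_trans with (lo ^ k * Rmin q 1 / hi ^ k * (hi ^ k * E m y));
      [apply Rmult_le_compat_l; lra | right; field; lra].
  - pose proof (Eprod_bounds lo hi (proj1 Hlo) Hb n x (proj1 Hx)).
    pose proof (Eprod_bounds lo hi (proj1 Hlo) Hb n y (proj1 Hy)).
    assert (lo ^ k <= lo ^ n) by (apply pow_le_1_decr; [lra | lia]).
    assert (hi ^ n <= hi ^ k) by (apply Rle_pow; auto; lia).
    apply Rle_trans with (lo ^ k * Rmin q 1 / hi ^ k * hi ^ k);
      [apply Rmult_le_compat_l; lra|].
    replace (lo ^ k * Rmin q 1 / hi ^ k * hi ^ k) with (lo ^ k * Rmin q 1) by (field; lra). nra.
Qed.

Lemma harnack_uniform : exists c, 0 < c <= 1 /\ harnack c.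
Proof.
  assert (Hmono : forall x y c c', 0 < c' <= c ->
            ((y < N)%nat -> forall n, c * E n y <= E n x) ->
            (y < N)%nat -> forall n, c' * E n y <= E n x).
  { intros x y c c' Hc Hcx Hy n. specialize (Hcx Hy n). pose proof (Eprod_pos n y Hy). nra. }
  destruct (finite_uniform N (fun x => 0 < pi x)
              (fun x c => forall y, in_support y -> forall n, c * E n y <= E n x))
    as [c [Hc Hharn]].
  - intros x c c' Hc Hcx y Hy. apply (Hmono x y c); [auto | intros; apply Hcx; auto | apply Hy].
  - intros x Hx Hpx.
    destruct (finite_uniform N (fun y => 0 < pi y)
                (fun y c => (y < N)%nat -> forall n, c * E n y <= E n x)) as [c [Hc Hcx]].
    + intros y c c' Hc Hcy. apply Hmono with c; auto.
    + intros y Hy Hpy. destruct (harnack_pair x y) as [c [Hc Hcy]]; try split; auto.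
      exists c; auto.
    + exists c. split; auto. intros y Hy. apply Hcx; apply Hy.
  - exists (Rmin c 1). split; [split; [apply Rmin_glb_lt; lra | apply Rmin_r]|].
    intros n x y Hx Hy. pose proof (Eprod_pos n y (proj1 Hy)).
    apply Rle_trans with (c * E n y); [apply Rmult_le_compat_r; [lra | apply Rmin_l]|].
    apply Hharn; auto; apply Hx.
Qed.

Definition Ebar n := sumN N (fun x => pi x * E n x).

Lemma Eprod_Ebar_compare c n x : harnack c -> in_support x ->
  c * Ebar n <= E n x /\ c * E n x <= Ebar n.
Proof.
  intros Hh Hx. unfold Ebar. split.
  - rewrite <- sumN_scal, <- (sum_pi_const (E n x)).
    rewrite (sumN_ext _ (fun y => c * (pi y * E n y)) (fun y => pi y * (c * E n y)))
      by (intros; ring).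
    apply sum_pi_le. intros y Hy. apply Hh; auto.
  - rewrite <- (sum_pi_const (c * E n x)). apply sum_pi_le. intros y Hy. apply Hh; auto.
Qed.

Lemma Ebar_pos n : 0 < Ebar n.
Proof.
  destruct HA1g as [x [_ [Hx [_ [Hpx _]]]]].
  eapply Rlt_le_trans; [| apply (sumN_term_le N (fun y => pi y * E n y) x); auto].
  - apply Rmult_lt_0_compat; auto. apply Eprod_pos; auto.
  - intros y Hy. apply Rmult_le_pos; auto. left; apply Eprod_pos; auto.
Qed.

Lemma Ebar_quasi_multiplicative c n k : 0 < c -> harnack c ->
  c * (Ebar n * Ebar k) <= Ebar (n + k) <= Ebar n * Ebar k / c.
Proof.
  intros Hc Hh.
  assert (Hx : forall x, in_support x ->
            c * Ebar k * E n x <= E (n + k) x <= Ebar k / c * E n x).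
  { intros x Hx. rewrite Eprod_split, <- !Viter_const.
    split; apply Viter_mono; auto; intros z Hz; destruct (Eprod_Ebar_compare c k z Hh Hz); auto.
    apply Rmult_le_reg_l with c; auto. replace (c * (Ebar k / c)) with (Ebar k) by (field; lra). auto. }
  unfold Ebar at 3. split.
  - replace (c * (Ebar n * Ebar k)) with (sumN N (fun x => pi x * (c * Ebar k * E n x))).
    + apply sum_pi_le. intros; apply Hx; auto.
    + rewrite (sumN_ext _ _ (fun x => (c * Ebar k) * (pi x * E n x))) by (intros; ring).
      rewrite sumN_scal. unfold Ebar. ring.
  - replace (Ebar n * Ebar k / c) with (sumN N (fun x => pi x * (Ebar k / c * E n x))).
    + apply sum_pi_le. intros; apply Hx; auto.
    + rewrite (sumN_ext _ _ (fun x => (Ebar k / c) * (pi x * E n x))) by (intros; ring).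
      rewrite sumN_scal. unfold Ebar. field. lra.
Qed.

Lemma Ebar_exp_bounds c : 0 < c <= 1 -> harnack c ->
  exists L, forall n, c * exp (INR n * L) <= Ebar n <= exp (INR n * L) / c.
Proof.
  intros Hc Hh.
  assert (HC : 0 <= - ln c)
    by (pose proof (ln_le_compat c 1 (proj1 Hc) (proj2 Hc)) as Hln; rewrite ln_1 in Hln; lra).
  destruct (quasi_additive_linear (fun n => ln (Ebar n)) (- ln c) HC) as [L HL].
  { intros n k. cbv beta.
    replace (ln (Ebar (n + k)) - ln (Ebar n) - ln (Ebar k))
      with (ln (Ebar (n + k)) - (ln (Ebar n) + ln (Ebar k))) by ring.
    rewrite <- ln_mult by apply Ebar_pos.
    apply Rabs_ln_le_of_ratio; [lra | apply Rmult_lt_0_compat; apply Ebar_pos |].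
    apply Ebar_quasi_multiplicative; auto; lra. }
  exists L. intros n. apply ratio_of_Rabs_ln_le; [lra | apply Ebar_pos | apply exp_pos |].
  rewrite ln_exp. apply HL.
Qed.

Lemma growth_rate : exists c L, 0 < c /\
  (forall n, c * exp (INR n * L) <= Ebar n <= exp (INR n * L) / c) /\
  (forall n x, in_support x -> c * exp (INR n * L) <= E n x <= exp (INR n * L) / c).
Proof.
  destruct harnack_uniform as [c [Hc Hh]]. destruct (Ebar_exp_bounds c Hc Hh) as [L HEbar].
  assert (Hcc : c * c <= c) by nra.
  exists (c * c), L. split; [nra|]. split.
  - intros n. destruct (HEbar n). pose proof (exp_pos (INR n * L)). split; [nra|].
    apply Rle_trans with (exp (INR n * L) / c); auto.
    unfold Rdiv. apply Rmult_le_compat_l; [lra|]. apply Rinv_le_contravar; nra.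
  - intros n x Hx. destruct (HEbar n). destruct (Eprod_Ebar_compare c n x Hh Hx).
    pose proof (exp_pos (INR n * L)). split.
    + apply Rle_trans with (c * Ebar n); auto. rewrite Rmult_assoc. apply Rmult_le_compat_l; lra.
    + apply Rmult_le_reg_l with c; [lra|].
      replace (c * (exp (INR n * L) / (c * c))) with (exp (INR n * L) / c) by (field; lra). lra.
Qed.

Lemma LPhi1_seq_cv c L : 0 < c ->
  (forall n, c * exp (INR n * L) <= Ebar n <= exp (INR n * L) / c) ->
  Un_cv (LPhi1_seq N pi P phib) L.
Proof.
  intros Hc HEbar. apply Un_cv_ext with (fun k => ln (Ebar (S k)) / (INR (S k) * 1)).
  - intros k. unfold LPhi1_seq, Ebar. rewrite Rmult_1_r. reflexivity.
  - apply (ln_Rpower_rate_cv _ c L 1 Hc Rlt_0_1). intros n.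
    pose proof (exp_pos (INR (S n) * L)). destruct (HEbar (S n)).
    rewrite !Rpower_1; [auto | apply Rdiv_lt_0_compat | apply Rmult_lt_0_compat]; lra.
Qed.

Lemma LPhi_seq_cv c L p : 0 < c -> 0 < p ->
  (forall n x, in_support x -> c * exp (INR n * L) <= E n x <= exp (INR n * L) / c) ->
  Un_cv (LPhi_seq N pi P phib p) L.
Proof.
  intros Hc Hp HE. unfold LPhi_seq. apply (ln_Rpower_rate_cv _ c L p); auto. intros n.
  rewrite (sumN_ext _ _ (fun x => pi x * rpow (E (S n) x) p)) by (intros; ring).
  rewrite <- (sum_pi_const (Rpower (c * exp (INR (S n) * L)) p)) at 1.
  rewrite <- (sum_pi_const (Rpower (exp (INR (S n) * L) / c) p)).
  pose proof (exp_pos (INR (S n) * L)).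
  split; apply sum_pi_le; intros x Hx; destruct (HE (S n) x Hx);
    pose proof (Eprod_pos (S n) x (proj1 Hx)); rewrite rpow_pos_eq by lra;
    apply Rle_Rpower_l; try lra; split; try lra; apply Rmult_lt_0_compat; lra.
Qed.

Lemma Lpnorm_ge_pointwise p f x : 0 < p -> in_support x ->
  Rabs (f x) * Rpower (pi x) (/ p) <= Lpnorm N pi p f.
Proof.
  intros Hp Hx. destruct (Rlt_dec 0 (Rabs (f x))) as [Hfx|Hfx].
  2:{ replace (Rabs (f x)) with 0 by (pose proof (Rabs_pos (f x)); lra).
      rewrite Rmult_0_l. apply rpow_nonneg. }
  set (t := Rpower (Rabs (f x)) p * pi x).
  assert (Ht : 0 < t) by (apply Rmult_lt_0_compat; [apply exp_pos | apply Hx]).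
  set (Sg := sumN N (fun y => rpow (Rabs (f y)) p * pi y)).
  assert (HS : t <= Sg).
  { unfold Sg, t. rewrite <- rpow_pos_eq by auto.
    apply (sumN_term_le N (fun y => rpow (Rabs (f y)) p * pi y)); [| apply Hx].
    intros y Hy. apply Rmult_le_pos; [apply rpow_nonneg | auto]. }
  unfold Lpnorm. fold Sg. rewrite rpow_pos_eq by lra.
  apply Rle_trans with (Rpower t (/ p)).
  - unfold t. rewrite <- Rpower_mult_distr by (apply Hx || apply exp_pos).
    rewrite Rpower_mult, Rinv_r, Rpower_1 by lra. lra.
  - apply Rle_Rpower_l; [left; apply Rinv_0_lt_compat; auto | lra].
Qed.

Lemma LpConv_pointwise p fs f x : 0 < p -> LpConv N pi p fs f -> in_support x ->
  Un_cv (fun n => fs n x) (f x).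
Proof.
  intros Hp Hc Hx e He. set (w := Rpower (pi x) (/ p)). assert (Hw : 0 < w) by apply exp_pos.
  destruct (Hc (e * w)) as [M HM]; [apply Rmult_lt_0_compat; auto|]. exists M. intros n Hn.
  specialize (HM n Hn). unfold R_dist in *.
  rewrite Rminus_0_r, Rabs_right in HM by (apply Rle_ge, rpow_nonneg).
  pose proof (Lpnorm_ge_pointwise p (fun y => fs n y - f y) x Hp Hx) as Hpt.
  cbv beta in Hpt. fold w in Hpt. apply Rmult_lt_reg_r with w; auto. lra.
Qed.

Lemma LpConv_of_pointwise p fs f : 0 < p ->
  (forall x, in_support x -> Un_cv (fun n => fs n x) (f x)) -> LpConv N pi p fs f.
Proof.
  intros Hp Hc e He. set (e' := e / 2).
  destruct (finite_eventually N (fun x => 0 < pi x) (fun n x => Rabs (fs n x - f x) < e'))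
    as [M HM].
  { intros x Hx Hpx. destruct (Hc x (conj Hx Hpx) e') as [M HM]; [unfold e'; lra|].
    exists M. apply HM. }
  exists M. intros n Hn. unfold R_dist. rewrite Rminus_0_r, Rabs_right by (apply Rle_ge, rpow_nonneg).
  set (Sg := sumN N (fun y => rpow (Rabs (fs n y - f y)) p * pi y)).
  assert (HS : Sg <= Rpower e' p).
  { unfold Sg. rewrite (sumN_ext _ _ (fun y => pi y * rpow (Rabs (fs n y - f y)) p)) by (intros; ring).
    rewrite <- (sum_pi_const (Rpower e' p)). apply sum_pi_le. intros x Hx.
    specialize (HM n Hn x (proj1 Hx) (proj2 Hx)). unfold rpow. destruct (Rlt_dec 0 _).
    - apply Rle_Rpower_l; lra.
    - left; apply exp_pos. }
  unfold Lpnorm. fold Sg. unfold rpow at 1. destruct (Rlt_dec 0 Sg); [| lra].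
  apply Rle_lt_trans with (Rpower (Rpower e' p) (/ p)).
  - apply Rle_Rpower_l; [left; apply Rinv_0_lt_compat; auto | lra].
  - rewrite Rpower_mult, Rinv_r, Rpower_1 by (unfold e'; lra). unfold e'; lra.
Qed.

Lemma ghat_nonneg x : (x < N)%nat -> 0 <= g x.
Proof. intros Hx. apply sumN_nonneg. intros y Hy. apply Rmult_le_pos; auto. Qed.

Lemma ghat_pos : exists x, in_support x /\ 0 < g x.
Proof.
  destruct HA1g as [x [y [Hx [Hy [Hpx [HPxy Hgxy]]]]]]. exists x. split; [split; auto|].
  eapply Rlt_le_trans; [| apply (sumN_term_le N (fun z => gam x z * P x z) y); auto].
  - apply Rmult_lt_0_compat; auto.
  - intros z Hz. apply Rmult_le_pos; auto.
Qed.

Lemma Vop_add f h x : V (fun y => f y + h y) x = V f x + V h x.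
Proof. unfold Vop. rewrite <- sumN_plus. apply sumN_ext. intros; ring. Qed.

Lemma Top_ext_support f h x :
  in_support x -> (forall y, in_support y -> f y = h y) -> T f x = T h x.
Proof. intros Hx Hfh. unfold Top. rewrite (Vop_ext_support f h); auto. Qed.

Lemma Titer_decomp k h x :
  Nat.iter k T h x = Nat.iter k V h x + Nat.iter k T (fun _ => 0) x.
Proof.
  revert x; induction k as [|k IH]; intros x; [cbn; ring|]. rewrite !Nat.iter_succ.
  change (V (Nat.iter k T h) x + g x = V (Nat.iter k V h) x + (V (Nat.iter k T (fun _ => 0)) x + g x)).
  rewrite (Vop_ext _ (fun y => Nat.iter k V h y + Nat.iter k T (fun _ => 0) y)) by auto.
  rewrite Vop_add. ring.
Qed.

Lemma Titer0_succ k x :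
  Nat.iter (S k) T (fun _ => 0) x = Nat.iter k V g x + Nat.iter k T (fun _ => 0) x.
Proof.
  rewrite Nat.iter_succ_r, Titer_decomp. f_equal. apply Viter_ext. intros y.
  assert (Hzero : V (fun _ => 0) y = 0).
  { unfold Vop. rewrite (sumN_ext _ _ (fun _ => 0)) by (intros; ring). apply sumN_zero. }
  unfold Top. rewrite Hzero. ring.
Qed.

Lemma Titer0_nonneg k x : in_support x -> 0 <= Nat.iter k T (fun _ => 0) x.
Proof.
  revert x; induction k as [|k IH]; intros x Hx; [cbn; lra|]. rewrite Titer0_succ.
  assert (0 <= Nat.iter k V g x) by (apply Viter_nonneg; auto; intros y Hy; apply ghat_nonneg, Hy).
  specialize (IH x Hx). lra.
Qed.

Lemma Titer0_mono n m x : (n <= m)%nat -> in_support x ->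
  Nat.iter n T (fun _ => 0) x <= Nat.iter m T (fun _ => 0) x.
Proof.
  intros Hnm Hx. induction Hnm as [|m Hnm IH]; [lra|]. rewrite Titer0_succ.
  assert (0 <= Nat.iter m V g x) by (apply Viter_nonneg; auto; intros y Hy; apply ghat_nonneg, Hy).
  lra.
Qed.

Lemma markov_sol_iter h k x :
  markov_sol N pi P phib gam h -> in_support x -> Nat.iter k T h x = h x.
Proof.
  intros [Hh Hfix]. revert x; induction k as [|k IH]; intros x Hx; [reflexivity|].
  rewrite Nat.iter_succ, (Top_ext_support _ h); auto. symmetry. apply Hfix; apply Hx.
Qed.

Lemma Top_cv (F : nat -> nat -> R) G x : in_support x ->
  (forall y, in_support y -> Un_cv (fun n => F n y) (G y)) ->
  Un_cv (fun n => T (F n) x) (T G x).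
Proof.
  intros Hx HF. unfold Top. apply CV_plus; [| apply Un_cv_const]. unfold Vop.
  apply Un_cv_sumN. intros y Hy. destruct (support_cases y Hy) as [Hpy|Hy'].
  - rewrite (kernel_vanishes_off_support x y) by (auto; lra).
    apply Un_cv_ext with (fun _ => 0); [intros; ring | rewrite Rmult_0_r; apply Un_cv_const].
  - apply CV_mult; [apply CV_mult; [apply HF; auto | apply Un_cv_const] | apply Un_cv_const].
Qed.

Lemma markov_sol_of_iter_cv h hs : inHp N pi hs ->
  (forall x, in_support x -> Un_cv (fun n => Nat.iter n T h x) (hs x)) ->
  markov_sol N pi P phib gam hs.
Proof.
  intros Hhs Hcv. split; auto. intros x Hx Hpx. assert (Hxs : in_support x) by (split; auto).
  apply UL_sequence with (fun n => Nat.iter (S n) T h x).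
  - apply (Un_cv_succ (fun n => Nat.iter n T h x)). auto.
  - apply Un_cv_ext with (fun n => T (Nat.iter n T h) x); [intros n; reflexivity|].
    apply Top_cv; auto.
Qed.

Lemma markov_sol_unique_of_attracting hs :
  (forall h x, in_support x -> Un_cv (fun n => Nat.iter n T h x) (hs x)) ->
  forall h, markov_sol N pi P phib gam h -> aeeq N pi hs h.
Proof.
  intros Hcv h Hh x Hx Hpx. assert (Hxs : in_support x) by (split; auto).
  apply UL_sequence with (fun n => Nat.iter n T h x); auto.
  apply Un_cv_ext with (fun _ => h x); [| apply Un_cv_const].
  intros n. symmetry. apply markov_sol_iter; auto.
Qed.

(** * The case [L_Phi < 0] *)

Section Decay.
Variables (K rho : R).
Hypothesis HK : 0 < K.
Hypothesis Hrho : 0 <= rho < 1.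
Hypothesis Hdecay : forall n x, in_support x -> E n x <= K * rho ^ n.

Lemma Viter_vanishes f x : in_support x -> Un_cv (fun n => Nat.iter n V f x) 0.
Proof.
  intros Hx. destruct (finite_upper_bound N (fun y => 0 < pi y) (fun y => Rabs (f y)))
    as [B [HB HfB]].
  intros e He. destruct (pow_lt_1_zero rho ltac:(rewrite Rabs_right; lra) (e / (B * K)))
    as [M HM]; [apply Rdiv_lt_0_compat; [| apply Rmult_lt_0_compat]; auto|].
  exists M. intros n Hn. unfold R_dist. rewrite Rminus_0_r.
  specialize (HM n Hn). rewrite Rabs_right in HM by (apply Rle_ge, pow_le; lra).
  eapply Rle_lt_trans; [apply Viter_abs; auto; intros y Hy; apply HfB; apply Hy|].
  apply Rle_lt_trans with (B * (K * rho ^ n)); [apply Rmult_le_compat_l; [lra | auto]|].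
  apply Rmult_lt_reg_r with (/ (B * K)); [apply Rinv_0_lt_compat; nra|].
  replace (B * (K * rho ^ n) * / (B * K)) with (rho ^ n) by (field; lra). exact HM.
Qed.

(* Each step adds [V^n ghat <= K rho^n sup ghat], a convergent geometric series. *)
Lemma Titer0_bounded : exists B, forall n x, in_support x -> Nat.iter n T (fun _ => 0) x <= B.
Proof.
  destruct (finite_upper_bound N (fun y => 0 < pi y) g) as [G [HG HgG]].
  assert (Hstep : forall n x, in_support x -> Nat.iter n V g x <= G * (K * rho ^ n)).
  { intros n x Hx. apply Rle_trans with (G * E n x); [| apply Rmult_le_compat_l; [lra | auto]].
    rewrite <- Viter_const. apply Viter_mono; auto. intros y Hy. apply HgG; apply Hy. }
  exists (G * K / (1 - rho)). intros n x Hx.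
  apply Rle_trans with (G * K * (1 - rho ^ n) / (1 - rho)).
  - induction n as [|n IH]; [cbn; unfold Rdiv; rewrite Rminus_diag, Rmult_0_r, Rmult_0_l; lra|].
    rewrite Titer0_succ. specialize (Hstep n x Hx).
    replace (G * K * (1 - rho ^ S n) / (1 - rho))
      with (G * (K * rho ^ n) + G * K * (1 - rho ^ n) / (1 - rho)) by (cbn; field; lra). lra.
  - unfold Rdiv. apply Rmult_le_compat_r; [left; apply Rinv_0_lt_compat; lra|].
    pose proof (pow_le rho n (proj1 Hrho)). assert (0 <= G * K) by nra. nra.
Qed.

Lemma Titer_cv_markov_sol : exists hs, markov_sol N pi P phib gam hs /\
  forall h x, in_support x -> Un_cv (fun n => Nat.iter n T h x) (hs x).
Proof.
  destruct Titer0_bounded as [B HB].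
  assert (Hlim : forall x, exists l, in_support x -> Un_cv (fun n => Nat.iter n T (fun _ => 0) x) l).
  { intros x. destruct (classic (in_support x)) as [Hx|Hx]; [| exists 0; tauto].
    destruct (growing_cv (fun n => Nat.iter n T (fun _ => 0) x)) as [l Hl].
    - intros n. apply Titer0_mono; auto.
    - exists B. intros r [n ->]. auto.
    - exists l; auto. }
  destruct (choice _ Hlim) as [hs Hhs].
  assert (Hcv : forall h x, in_support x -> Un_cv (fun n => Nat.iter n T h x) (hs x)).
  { intros h x Hx. apply Un_cv_ext with (fun n => Nat.iter n V h x + Nat.iter n T (fun _ => 0) x);
      [intros n; symmetry; apply Titer_decomp|].
    rewrite <- (Rplus_0_l (hs x)). apply CV_plus; [apply Viter_vanishes | apply Hhs]; auto. }
  exists hs. split; auto. apply markov_sol_of_iter_cv with (fun _ => 0); auto.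
  intros x Hx Hpx. apply (Rle_cv_lim (Un := fun _ => 0) (Vn := fun n => Nat.iter n T (fun _ => 0) x)).
  - intros n. apply Titer0_nonneg; split; auto.
  - apply Un_cv_const.
  - apply Hhs; split; auto.
Qed.

End Decay.

(** * The case [L_Phi >= 0] *)

Lemma Titer0_eventually_pos : exists M, forall n, (M <= n)%nat ->
  forall x, in_support x -> 0 < Nat.iter n T (fun _ => 0) x.
Proof.
  destruct ghat_pos as [x0 [Hx0 Hg0]]. destruct phib_bounded as [lo [hi [Hlo [_ Hb]]]].
  destruct (finite_eventually N (fun x => 0 < pi x)
              (fun n x => 0 < Nat.iter n T (fun _ => 0) x)) as [M HM].
  - intros x Hx Hpx. assert (Hxs : in_support x) by (split; auto).
    destruct (irreducible_path x x0 Hx Hx0) as [k Hk]. exists (S k). intros n Hn.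
    eapply Rlt_le_trans; [| apply (Titer0_mono (S k)); auto]. rewrite Titer0_succ.
    assert (lo ^ k * Pn N P k x x0 * g x0 <= Nat.iter k V g x).
    { apply (Viter_path_lower lo); auto; [lra | intros; apply Hb; auto|].
      intros z Hz; apply ghat_nonneg, Hz. }
    assert (0 < lo ^ k * Pn N P k x x0 * g x0)
      by (repeat apply Rmult_lt_0_compat; auto; apply pow_lt; lra).
    pose proof (Titer0_nonneg k x Hxs). lra.
  - exists M. intros n Hn x Hx. apply HM; auto; apply Hx.
Qed.

(* Past [M], where [T^M 0 >= d > 0] on the support, every block of [M] further steps
   adds at least [V^b (T^M 0) >= d E_b >= d c]. *)
Lemma Titer0_unbounded c : 0 < c -> (forall n x, in_support x -> c <= E n x) ->
  forall x B, in_support x -> exists n, B < Nat.iter n T (fun _ => 0) x.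
Proof.
  intros Hc Hlow x B Hx. destruct Titer0_eventually_pos as [M HM].
  destruct (finite_lower_bound N (fun y => 0 < pi y) (Nat.iter M T (fun _ => 0)))
    as [d [Hd Hdle]]; [intros y Hy Hpy; apply (HM M); [lia | split; auto]|].
  assert (Hblock : forall b, d * c + Nat.iter b T (fun _ => 0) x
                             <= Nat.iter (b + M) T (fun _ => 0) x).
  { intros b. rewrite Nat.iter_add, (Titer_decomp b (Nat.iter M T (fun _ => 0))).
    apply Rplus_le_compat_r.
    apply Rle_trans with (d * E b x); [apply Rmult_le_compat_l; [lra | auto]|].
    rewrite <- Viter_const. apply Viter_mono; auto. intros y Hy. apply Hdle; apply Hy. }
  assert (Hlin : forall i, INR i * (d * c) <= Nat.iter (i * M) T (fun _ => 0) x).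
  { induction i as [|i IH]; [change (INR 0) with 0; rewrite Rmult_0_l; apply Titer0_nonneg; auto|].
    replace (S i * M)%nat with (i * M + M)%nat by lia. rewrite S_INR.
    specialize (Hblock (i * M)%nat). lra. }
  destruct (archimed_mult (d * c) B) as [i Hi]; [nra|].
  exists (i * M)%nat. specialize (Hlin i). lra.
Qed.

Lemma no_markov_sol c : 0 < c -> (forall n x, in_support x -> c <= E n x) ->
  forall h, ~ markov_sol N pi P phib gam h.
Proof.
  intros Hc Hlow h Hh. destruct ghat_pos as [x [Hx _]].
  destruct (Titer0_unbounded c Hc Hlow x (h x) Hx) as [n Hn].
  rewrite <- (markov_sol_iter h n x Hh Hx), Titer_decomp in Hn.
  assert (0 <= Nat.iter n V h x) by (apply Viter_nonneg; auto; intros y Hy; apply (proj1 Hh); apply Hy).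
  lra.
Qed.

Lemma Vop_compact p : 0 < p -> compact_op N pi p (Nat.iter 1 V).
Proof.
  intros Hp f Hf. destruct phib_bounded as [lo [hi [Hlo [Hhi Hb]]]].
  destruct (finite_upper_bound N (fun y => 0 < pi y) (fun y => / Rpower (pi y) (/ p)))
    as [Bf [HBf HBf']].
  assert (Hfb : forall k y, in_support y -> Rabs (f k y) <= Bf).
  { intros k y Hy. pose proof (Lpnorm_ge_pointwise p (f k) y Hp Hy). specialize (Hf k).
    assert (Hw : 0 < Rpower (pi y) (/ p)) by apply exp_pos.
    apply Rle_trans with (/ Rpower (pi y) (/ p)); [| apply HBf'; apply Hy].
    apply Rmult_le_reg_r with (Rpower (pi y) (/ p)); auto. rewrite Rinv_l by lra. lra. }
  destruct (bounded_subseq_cv_finite N (fun x => 0 < pi x) (fun k x => V (f k) x) (Bf * hi))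
    as [s [G [Hs HG]]].
  { intros k x Hx Hpx. apply Rle_trans with (Bf * E 1 x).
    - exact (Viter_abs 1 (f k) Bf x (conj Hx Hpx) (Hfb k)).
    - apply Rmult_le_compat_l; [lra|].
      pose proof (Eprod_bounds lo hi (proj1 Hlo) Hb 1 x Hx) as HE1. rewrite pow_1 in HE1. lra. }
  exists s, G. split; auto.
  apply (LpConv_of_pointwise p (fun k => Nat.iter 1 V (f (s k))) G Hp).
  intros x Hx. apply HG; apply Hx.
Qed.

Lemma A3_holds p : 0 < p -> A3 N pi P phib gam p.
Proof.
  intros Hp. split; [| split].
  - intros x Hx _. apply ghat_nonneg; auto.
  - intros h1 h2 Hh x Hx Hpx. apply Vop_ext_support; [split; auto|]. intros y Hy. apply Hh; apply Hy.
  - exists 1%nat. split; auto. apply Vop_compact; auto.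
Qed.

Section GrowthRate.
Variables (c L : R).
Hypothesis Hc : 0 < c.
Hypothesis HE : forall n x, in_support x -> c * exp (INR n * L) <= E n x <= exp (INR n * L) / c.

Lemma neg_rate_of_markov_sol h : markov_sol N pi P phib gam h -> L < 0.
Proof.
  intros Hh. destruct (Rlt_le_dec L 0) as [HL|HL]; auto. exfalso.
  apply (no_markov_sol c Hc) with h; auto. intros n x Hx. destruct (HE n x Hx) as [Hlow _].
  assert (1 <= exp (INR n * L)) by (rewrite <- exp_0; apply exp_le_compat, Rmult_le_pos; auto; apply pos_INR).
  nra.
Qed.

Lemma attracting_markov_sol_of_neg_rate p : 0 < p -> L < 0 ->
  exists hs, markov_sol N pi P phib gam hs /\
    (forall h', markov_sol N pi P phib gam h' -> aeeq N pi hs h') /\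
    (forall h, inHp N pi h -> LpConv N pi p (fun n => Nat.iter n T h) hs).
Proof.
  intros Hp HL.
  destruct (Titer_cv_markov_sol (/ c) (exp L)) as [hs [Hhs Hcv]].
  - apply Rinv_0_lt_compat; auto.
  - split; [left; apply exp_pos | rewrite <- exp_0; apply exp_increasing; auto].
  - intros n x Hx. rewrite <- exp_INR_mult, Rmult_comm. unfold Rdiv in HE. apply HE; auto.
  - exists hs. split; [| split]; auto.
    + apply markov_sol_unique_of_attracting; auto.
    + intros h _. apply LpConv_of_pointwise; auto.
Qed.

End GrowthRate.

End MarkovChain.

Theorem mainTheorem2
  (N : nat) (pi : nat -> R) (P phib gam : nat -> nat -> R)
  (Hpi0 : forall x, (x < N)%nat -> 0 <= pi x)
  (Hpi1 : sumN N pi = 1)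
  (HP0 : forall x y, (x < N)%nat -> (y < N)%nat -> 0 <= P x y)
  (HP1 : forall x, (x < N)%nat -> sumN N (P x) = 1)
  (Hstat : forall y, (y < N)%nat -> sumN N (fun x => pi x * P x y) = pi y)
  (HA1phi : forall x y, (x < N)%nat -> (y < N)%nat -> 0 < phib x y)
  (Hgam0 : forall x y, (x < N)%nat -> (y < N)%nat -> 0 <= gam x y)
  (HA1g : exists x y, (x < N)%nat /\ (y < N)%nat /\ 0 < pi x /\ 0 < P x y /\ 0 < gam x y)
  (HA2 : forall B : nat -> bool, 0 < measB N pi B ->
         forall x, (x < N)%nat -> exists n, 0 < PnB N P n x B) :
  (forall p, 1 <= p -> A3 N pi P phib gam p) /\
  exists L : R,
    Un_cv (LPhi1_seq N pi P phib) L /\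
    (forall p, 1 <= p -> Un_cv (LPhi_seq N pi P phib p) L) /\
    (forall p, 1 <= p ->
      ((exists h, markov_sol N pi P phib gam h) <-> L < 0) /\
      ((exists h, markov_sol N pi P phib gam h /\
          forall h', markov_sol N pi P phib gam h' -> aeeq N pi h h') <-> L < 0) /\
      ((exists h hlim, inHp N pi h /\ inHp N pi hlim /\
          LpConv N pi p (fun n => Nat.iter n (Top N P phib gam) h) hlim) <-> L < 0) /\
      ((exists hs, markov_sol N pi P phib gam hs /\
          (forall h', markov_sol N pi P phib gam h' -> aeeq N pi hs h') /\
          (forall h, inHp N pi h ->
             LpConv N pi p (fun n => Nat.iter n (Top N P phib gam) h) hs)) <-> L < 0)).
Proof.
  split; [intros p Hp; apply A3_holds; auto; lra|].
  destruct (growth_rate N pi P phib gam) as [c [L [Hc [HEbar HE]]]]; auto.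
  exists L. split; [apply (LPhi1_seq_cv N pi P phib c); auto|].
  split; [intros p Hp; apply (LPhi_seq_cv N pi P phib) with c; auto; lra|].
  intros p Hp. assert (Hp0 : 0 < p) by lra.
  assert (Hsol : forall h, markov_sol N pi P phib gam h -> L < 0)
    by (apply (neg_rate_of_markov_sol N pi P phib gam) with c; auto).
  assert (Hatt := attracting_markov_sol_of_neg_rate N pi P phib gam Hpi0 Hpi1 HP0 Hstat HA1phi Hgam0
                    c L Hc HE p Hp0).
  split; [| split; [| split]]; split.
  - intros [h Hh]. eauto.
  - intros HL. destruct (Hatt HL) as [hs [Hhs _]]. eauto.
  - intros [h [Hh _]]. eauto.
  - intros HL. destruct (Hatt HL) as [hs [Hhs [Huniq _]]]. eauto.
  - intros [h [hlim [_ [Hlim Hcv]]]]. apply (Hsol hlim).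
    apply (markov_sol_of_iter_cv N pi P phib gam Hpi0 HP0 Hstat h); auto.
    intros x Hx. apply (LpConv_pointwise N pi Hpi0 p _ _ x Hp0 Hcv Hx).
  - intros HL. destruct (Hatt HL) as [hs [[Hhs _] [_ Hcv]]].
    assert (Hzero : inHp N pi (fun _ => 0)) by (intros x _ _; lra).
    exists (fun _ => 0), hs. auto.
  - intros [hs [Hhs _]]. eauto.
  - exact Hatt.
Qed.
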